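(* Let $p$ be a prime, $n\ge1$, and let $s_1,\ldots,s_{n+1}$ be integers with $0\le s_\nu<p$ for all $\nu=1,\ldots,n+1$. If \[ \sum_{\nu=1}^n s_\nu\,\varphi(p^{\nu-1})=s_{n+1}\,p^{n-1}, \] then $s_1=s_2=\cdots=s_{n+1}$.
   Context: $\varphi$ denotes Euler's totient function (so $\varphi(p^0)=1$). *)

From mathcomp Require Import all_boot.

(** Since [phi(p^0) = 1] and [phi(p^k) = (p - 1) p^(k-1)] for [k >= 1], adding
    [s_2] to both sides of the identity gives
    [s_1 + p (s_2 + sum_(3 <= nu <= n) s_nu phi(p^(nu-2))) = s_2 + p (s_(n+1) p^(n-2))].
    Both sides are written in base [p] with a last digit [< p], so [s_1 = s_2]
    and dividing by [p] yields the same identity for [s_2, ..., s_(n+1)];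
    induction on [n] concludes. *)
From mathcomp Require Import all_boot.

Lemma radix_digit_inj (p a b x y : nat) :
  a < p -> b < p -> a + p * x = b + p * y -> a = b /\ x = y.
Proof.
move=> ap bp E.
have ab : a = b.
  have := congr1 (modn^~ p) E.
  by rewrite /= !(addnC _ (p * _)) !(mulnC p) !modnMDl !modn_small.
split=> //; apply/eqP.
by rewrite -(eqn_pmul2l (leq_ltn_trans (leq0n a) ap)) -(eqn_add2l a) {2}ab E.
Qed.

Lemma weighted_digits_const (p m : nat) (f : nat -> nat) :
  (forall k, k <= m.+1 -> f k < p) ->
  f 0 + \sum_(k < m) f k.+1 * p.-1 * p ^ k = f m.+1 * p ^ m ->
  forall k, k <= m.+1 -> f k = f 0.
Proof.
elim: m f => [|m IH] f f_lt_p E.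
  by move: E; rewrite big_ord0 addn0 muln1 => E [|[|k]].
have p_gt0 : 0 < p by apply: leq_ltn_trans (f_lt_p 0 _).
have [f10 E'] : f 0 = f 1 /\
    f 1 + \sum_(k < m) f k.+2 * p.-1 * p ^ k = f m.+2 * p ^ m.
  apply: (@radix_digit_inj p); [exact: f_lt_p | exact: f_lt_p |].
  set S := \sum_(k < m) _.
  have pS : \sum_(k < m) f (bump 0 k).+1 * p.-1 * p ^ bump 0 k = p * S.
    by rewrite big_distrr; apply: eq_bigr => k _; rewrite /bump add1n expnS mulnCA.
  move: E; rewrite big_ord_recl /= muln1 expnS pS => E.
  have pf1 : p * f 1 = f 1 * p.-1 + f 1 by rewrite -{1}(prednK p_gt0) mulnC mulnSr.
  by rewrite mulnCA -E !mulnDr pf1 -!addnA (addnCA (f 1 * _)) (addnCA (f 0)).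
have IHf := IH (fun k => f k.+1) (fun k k_le => f_lt_p k.+1 k_le) E'.
by case=> [|k] // k_le; rewrite IHf // f10.
Qed.

Theorem lemma3p4 (p n : nat) (s : nat -> nat) :
  prime p -> 1 <= n ->
  (forall nu, 1 <= nu <= n.+1 -> s nu < p) ->
  \sum_(1 <= nu < n.+1) s nu * totient (p ^ nu.-1) = s n.+1 * p ^ n.-1 ->
  forall nu, 1 <= nu <= n.+1 -> s nu = s 1.
Proof.
move=> p_prime; case: n => [//|m] _ s_lt_p E [//|nu] nu_le.
have E' : s 1 + \sum_(k < m) s k.+2 * p.-1 * p ^ k = s m.+2 * p ^ m.
  rewrite -E big_add1 big_nat_recl //= big_mkord muln1.
  by congr (_ + _); apply: eq_bigr => k _; rewrite totient_pfactor // mulnA.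
apply: (@weighted_digits_const p m (fun k => s k.+1)) E' _ nu_le.
by move=> k k_le; apply: s_lt_p.
Qed.
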